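(* Let $n$ be the number of categories and $\epsilon\in(0,1)$. Let $\widehat{P}$ be an empirical distribution of $p$ samples and $\widehat{Q}$ an empirical distribution of $p'$ samples, both over the same $n$ categories. Let $$\bar{\mathcal{Q}}=\left\{Q\in\mathbb{S}^n:\ D(\widehat{Q}\,\|\,Q)\le\frac{1}{p'}\log\left(\frac1\epsilon\right)+\frac{2n}{p'}\log(p'+1)\right\},$$ and let $D^*_0=\min_{Q\in\bar{\mathcal{Q}}}D(\widehat{P}\,\|\,Q)$. If $$D^*_0\ \ge\ \frac1p\log\left(\frac1\epsilon\right)+\frac{2n}{p}\log(p+1),$$ then there is no distribution $Q$ on the $n$ categories such that simultaneously (1) $\widehat{Q}$ is typical at significance level $\epsilon$ with respect to $\{Q\}$ (as an empirical distribution of $p'$ samples), and (2) $\widehat{P}$ is typical at significance level $\epsilon$ with respect to $\{Q\}$ (as an empirical distribution of $p$ samples).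
   Context: $\mathbb{S}^n$ is the probability simplex in $\mathbb{R}^n$, and $D(P\|Q)=\sum_iP_i\log(P_i/Q_i)$ is the Kullback–Leibler divergence. An empirical distribution of $m$ samples over $n$ categories is a vector $\frac1m(m_1,\dots,m_n)$ with nonnegative integers $m_i$ summing to $m$. For a distribution $Q$ and a set $\mathcal{S}$ of empirical distributions of $m$ samples, $\mathbb{P}_Q(\mathcal{S})$ is the probability that $m$ i.i.d. draws from $Q$ have empirical distribution in $\mathcal{S}$. Typical: let $\widehat{P}^1,\widehat{P}^2,\dots$ be an ordering of all empirical distributions of $m$ samples over the $n$ categories with $\mathbb{P}_Q(\widehat{P}^1)\le\mathbb{P}_Q(\widehat{P}^2)\le\cdots$; an empirical distribution $\widehat{P}^\ell$ is typical at significance level $\epsilon$ with respect to a set $\mathcal{Q}$ of distributions iff $\sup_{Q\in\mathcal{Q}}\mathbb{P}_Q(\{\widehat{P}^1,\dots,\widehat{P}^\ell\})\ge\epsilon$ for any such ordering (the ordering depending on $Q$). *)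

From HB Require Import structures.
From mathcomp Require Import all_boot all_order all_algebra.
From mathcomp Require Import all_classical all_reals.
From mathcomp Require Import ereal exp.
Set Implicit Arguments. Unset Strict Implicit. Unset Printing Implicit Defensive.
Import Order.TTheory GRing.Theory Num.Theory.
Local Open Scope ring_scope.
Local Open Scope classical_set_scope.

Section Defs.
Variable R : realType.
Variable n : nat.

Definition simplex : set ('I_n -> R) :=
  [set Q | (forall i, 0 <= Q i) /\ \sum_(i < n) Q i = 1].

Definition KL (P Q : 'I_n -> R) : \bar R :=
  if [forall i, (P i != 0) ==> (Q i != 0)]
  then (\sum_(i < n) (if P i == 0 then 0 else P i * ln (P i / Q i)))%:E
  else +oo%E.

(* An empirical distribution of m samples is given by its count vector c
   (entries in 'I_m.+1, summing to m); its value is c / m. *)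
Definition emp (m : nat) (c : {ffun 'I_n -> 'I_m.+1}) : 'I_n -> R :=
  fun i => (c i : nat)%:R / m%:R.

Definition types (m : nat) : seq {ffun 'I_n -> 'I_m.+1} :=
  enum [set c : {ffun 'I_n -> 'I_m.+1} | \sum_(i < n) (c i : nat) == m]%SET.

Definition probT (m : nat) (Q : 'I_n -> R) (c : {ffun 'I_n -> 'I_m.+1}) : R :=
  \sum_(s : {ffun 'I_m -> 'I_n} |
         [forall i, #|[set j | s j == i]%SET| == (c i : nat)])
     \prod_(j < m) Q (s j).

Definition is_ordering (m : nat) (Q : 'I_n -> R) (s : seq {ffun 'I_n -> 'I_m.+1}) :=
  perm_eq s (types m) /\ sorted (fun a b => probT Q a <= probT Q b) s.

Definition prefix_prob (m : nat) (Q : 'I_n -> R) (s : seq {ffun 'I_n -> 'I_m.+1})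
  (c : {ffun 'I_n -> 'I_m.+1}) : R :=
  \sum_(c' <- take (index c s).+1 s) probT Q c'.

Definition typical (m : nat) (eps : R) (Qs : set ('I_n -> R))
  (c : {ffun 'I_n -> 'I_m.+1}) : Prop :=
  forall ord : ('I_n -> R) -> seq {ffun 'I_n -> 'I_m.+1},
    (forall Q, Qs Q -> is_ordering Q (ord Q)) ->
    eps <= sup [set prefix_prob Q (ord Q) c | Q in Qs].

End Defs.

Arguments simplex {R n}.
Arguments KL {R n}.
Arguments emp {R n m}.
Arguments typical {R n} m.

From HB Require Import structures.
From mathcomp Require Import all_boot all_order all_algebra.
From mathcomp Require Import all_classical all_reals.
From mathcomp Require Import ereal exp sequences.
From mathcomp Require Import lra.
Import Order.TTheory GRing.Theory Num.Theory.
Set Implicit Arguments. Unset Strict Implicit. Unset Printing Implicit Defensive.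
Local Open Scope ring_scope.
Local Open Scope classical_set_scope.

(* Typicality of c for {Q} means that eps is at most the Q-mass of a prefix of
   an ordering of the types, hence at most #types * P_Q(c) <= (m+1)^n P_Q(c).
   By the method of types P_Q(c) <= exp(-m D(c/m || Q)), because the
   multinomial coefficient times prod_i (c_i/m)^c_i is P_{c/m}(c) <= 1.
   So D(c/m || Q) <= (log(1/eps) + n log(m+1))/m, strictly below the radius
   with 2n in the statement: a Q typical for both samples would lie in Qbar
   and satisfy D(P || Q) < D*_0. *)

Section MethodOfTypes.
Variable R : realType.
Variable n : nat.

Definition seqs_of_type (m : nat) (c : {ffun 'I_n -> 'I_m.+1}) :=
  [set s : {ffun 'I_m -> 'I_n} |
    [forall i, #|[set j | s j == i]%SET| == (c i : nat)]]%SET.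

Lemma prod_ffun_counts m (Q : 'I_n -> R) (s : {ffun 'I_m -> 'I_n}) :
  \prod_(j < m) Q (s j) = \prod_(i < n) Q i ^+ #|[set j | s j == i]%SET|.
Proof.
rewrite (partition_big s predT) //=; apply: eq_bigr => i _.
rewrite (eq_bigr (fun=> Q i)); last by move=> j /eqP->.
by rewrite -prodr_const; apply: eq_bigl => j; rewrite inE.
Qed.

Lemma probTE m (Q : 'I_n -> R) (c : {ffun 'I_n -> 'I_m.+1}) :
  probT Q c = #|seqs_of_type c|%:R * \prod_(i < n) Q i ^+ (c i : nat).
Proof.
rewrite /probT (eq_bigr (fun=> \prod_(i < n) Q i ^+ (c i : nat))); last first.
  move=> s /forallP s_c; rewrite prod_ffun_counts; apply: eq_bigr => i _.
  by rewrite (eqP (s_c i)).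
rewrite (eq_bigl (fun s => s \in seqs_of_type c)); last by move=> s; rewrite inE.
by rewrite sumr_const mulr_natl.
Qed.

Lemma probT_ge0 m (Q : 'I_n -> R) (c : {ffun 'I_n -> 'I_m.+1}) :
  (forall i, 0 <= Q i) -> 0 <= probT Q c.
Proof.
by move=> Q_ge0; rewrite probTE mulr_ge0 // prodr_ge0 // => i _; rewrite exprn_ge0.
Qed.

Lemma probT_le_sum_exp m (Q : 'I_n -> R) (c : {ffun 'I_n -> 'I_m.+1}) :
  (forall i, 0 <= Q i) -> probT Q c <= (\sum_i Q i) ^+ m.
Proof.
move=> Q_ge0; rewrite /probT -[m in X in _ <= X]card_ord -prodr_const.
rewrite bigA_distr_bigA /= [leRHS](bigID (fun s : {ffun 'I_m -> 'I_n} =>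
   [forall i, #|[set j | s j == i]%SET| == (c i : nat)])) /= lerDl.
by apply: sumr_ge0 => s _; apply: prodr_ge0.
Qed.

Lemma prefix_prob_le m (Q : 'I_n -> R) s (c : {ffun 'I_n -> 'I_m.+1}) :
  (forall i, 0 <= Q i) -> is_ordering Q s -> c \in s ->
  prefix_prob Q s c <= (size s)%:R * probT Q c.
Proof.
move=> Q_ge0 [_ s_sorted] cs; pose t := take (index c s).+1 s.
have t_le_c k : (k < size t)%N -> probT Q (nth c t k) <= probT Q c.
  rewrite size_take_min leq_min ltnS => /andP[k_le k_lt].
  rewrite nth_take ?ltnS // -[X in _ <= probT Q X](nth_index c cs).
  apply: (sorted_leq_nth (leT := fun a b => probT Q a <= probT Q b)) => //.
  - by move=> a b d /= /le_trans; apply.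
  - by rewrite inE index_mem.
rewrite /prefix_prob -/t (big_nth c) big_mkord.
apply: (@le_trans _ _ (\sum_(k < size t) probT Q c)).
  by apply: ler_sum => k _; apply: t_le_c.
rewrite sumr_const card_ord -[leLHS]mulr_natl.
apply: ler_wpM2r; first exact: probT_ge0.
by rewrite ler_nat size_take_min geq_minr.
Qed.

Lemma exists_ordering m (Q : 'I_n -> R) : exists s, is_ordering (m := m) Q s.
Proof.
exists (sort (fun a b => probT Q a <= probT Q b) (types n m)); split.
  by rewrite perm_sort perm_refl.
by apply: sort_sorted => a b; exact: le_total.
Qed.

Lemma size_types m : (size (types n m) <= m.+1 ^ n)%N.
Proof.
rewrite /types -cardE; apply: leq_trans (max_card _) _.
by rewrite card_ffun !card_ord.
Qed.

Lemma typical1_probT m (eps : R) (Q : 'I_n -> R) (c : {ffun 'I_n -> 'I_m.+1}) :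
  (forall i, 0 <= Q i) -> (\sum_(i < n) (c i : nat))%N = m ->
  typical m eps [set Q] c -> eps <= (m.+1 ^ n)%:R * probT Q c.
Proof.
move=> Q_ge0 c_sum c_typ; have [s s_ord] := exists_ordering m Q.
have cs : c \in s by rewrite (perm_mem s_ord.1) /types mem_enum inE c_sum.
have eps_le : eps <= prefix_prob Q s c.
  by have := c_typ (fun=> s); rewrite image_set1 sup1; apply => _ ->.
apply: le_trans eps_le (le_trans (prefix_prob_le Q_ge0 s_ord cs) _).
apply: ler_wpM2r; first exact: probT_ge0.
by rewrite ler_nat (perm_size s_ord.1) size_types.
Qed.

Lemma emp_sum m (c : {ffun 'I_n -> 'I_m.+1}) : (0 < m)%N ->
  (\sum_(i < n) (c i : nat))%N = m -> \sum_i emp c i = 1 :> R.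
Proof.
move=> m_gt0 c_sum; rewrite /emp -mulr_suml -natr_sum c_sum divff //.
by rewrite pnatr_eq0 -lt0n.
Qed.

Lemma emp_eq0 m (c : {ffun 'I_n -> 'I_m.+1}) i : (0 < m)%N ->
  (emp c i == 0 :> R) = ((c i : nat) == 0%N).
Proof.
move=> m_gt0; rewrite /emp mulf_eq0 invr_eq0 !pnatr_eq0.
by rewrite (negbTE (lt0n_neq0 m_gt0)) orbF.
Qed.

Definition loglik m (c : {ffun 'I_n -> 'I_m.+1}) (Q : 'I_n -> R) : R :=
  \sum_i if (c i : nat) == 0%N then 0 else (c i : nat)%:R * ln (Q i).

Definition supported m (c : {ffun 'I_n -> 'I_m.+1}) (Q : 'I_n -> R) :=
  [forall i, ((c i : nat) != 0%N) ==> (0 < Q i)].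

Lemma prod_exp_loglik m (c : {ffun 'I_n -> 'I_m.+1}) (Q : 'I_n -> R) :
  supported c Q -> \prod_i Q i ^+ (c i : nat) = expR (loglik c Q).
Proof.
move=> /forallP Q_pos; rewrite expR_sum; apply: eq_bigr => i _.
case: eqP => [->|/eqP c_neq0]; first by rewrite expr0 expR0.
by rewrite expRM_natl lnK // posrE (implyP (Q_pos i)).
Qed.

Lemma supported_emp m (c : {ffun 'I_n -> 'I_m.+1}) : (0 < m)%N ->
  supported c (emp c).
Proof.
move=> m_gt0; apply/forallP => i; apply/implyP => c_neq0.
by rewrite lt_def emp_eq0 // c_neq0 divr_ge0.
Qed.

Lemma KL_emp_supported m (c : {ffun 'I_n -> 'I_m.+1}) (Q : 'I_n -> R) :
  (0 < m)%N -> (forall i, 0 <= Q i) -> supported c Q ->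
  KL (emp c) Q = ((loglik c (emp c) - loglik c Q) / m%:R)%:E.
Proof.
move=> m_gt0 Q_ge0 /forallP Q_pos; have A_pos := forallP (supported_emp c m_gt0).
rewrite /KL; case: forallP => [_|[]]; last first.
  by move=> i; rewrite emp_eq0 //; apply/implyP => /(implyP (Q_pos i))/gt_eqF->.
congr (_%:E); rewrite /loglik -sumrB mulr_suml; apply: eq_bigr => i _.
rewrite emp_eq0 //; case: eqP => [_|/eqP c_neq0]; first by rewrite subr0 mul0r.
rewrite ln_div ?posrE ?(implyP (A_pos i)) ?(implyP (Q_pos i)) //.
by rewrite -mulrBr mulrAC.
Qed.

Lemma probT_unsupported m (c : {ffun 'I_n -> 'I_m.+1}) (Q : 'I_n -> R) :
  (forall i, 0 <= Q i) -> ~~ supported c Q -> probT Q c = 0.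
Proof.
move=> Q_ge0 /forallPn[i]; rewrite negb_imply -leNgt => /andP[c_neq0 Q_le0].
have Qi0 : Q i = 0 by apply/eqP; rewrite eq_le Q_le0 Q_ge0.
by rewrite probTE (bigD1 i) //= Qi0 expr0n (negbTE c_neq0) mul0r !mulr0.
Qed.

Lemma probT_le_expR_loglik m (c : {ffun 'I_n -> 'I_m.+1}) (Q : 'I_n -> R) :
  (0 < m)%N -> (\sum_(i < n) (c i : nat))%N = m -> supported c Q ->
  probT Q c <= expR (loglik c Q - loglik c (emp c)).
Proof.
move=> m_gt0 c_sum Q_supp.
have A_ge0 (i : 'I_n) : 0 <= emp c i :> R by rewrite divr_ge0.
have : probT (emp c : 'I_n -> R) c <= 1.
  by apply: le_trans (probT_le_sum_exp c A_ge0) _; rewrite emp_sum // expr1n.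
rewrite !probTE !prod_exp_loglik ?supported_emp // expRB => card_le.
rewrite mulrC ler_pdivlMr ?expR_gt0 // -mulrA.
by rewrite ler_piMr ?expR_ge0.
Qed.

Definition KL_radius (eps : R) (m k : nat) : R :=
  (m%:R)^-1 * ln (eps^-1) + k%:R / m%:R * ln (m%:R + 1).

Lemma KL_emp_le_typical1 m (eps : R) (Q : 'I_n -> R) (c : {ffun 'I_n -> 'I_m.+1}) :
  0 < eps -> (forall i, 0 <= Q i) -> (0 < m)%N ->
  (\sum_(i < n) (c i : nat))%N = m -> typical m eps [set Q] c ->
  (KL (emp c) Q <= (KL_radius eps m n)%:E)%E.
Proof.
move=> eps_gt0 Q_ge0 m_gt0 c_sum c_typ.
have eps_le := typical1_probT Q_ge0 c_sum c_typ.
have [Q_supp|Q_unsupp] := boolP (supported c Q); last first.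
  by move: eps_le; rewrite probT_unsupported // mulr0 leNgt eps_gt0.
rewrite KL_emp_supported // lee_fin.
have N_gt0 : 0 < (m.+1 ^ n)%:R :> R by rewrite ltr0n expn_gt0.
have := le_trans eps_le
  (ler_wpM2l (ltW N_gt0) (probT_le_expR_loglik m_gt0 c_sum Q_supp)).
rewrite -ler_ln ?posrE ?mulr_gt0 ?expR_gt0 // lnM ?posrE ?expR_gt0 // expRK.
rewrite natrX lnXn -?natr1 ?ltr0n // => ln_eps_le.
have m_gt0' : 0 < m%:R :> R by rewrite ltr0n.
rewrite /KL_radius lnV ?posrE // -(ler_pM2l m_gt0') mulrDr !mulrA mulfV ?gt_eqF //.
rewrite mul1r !(mulrC m%:R) !mulfK ?gt_eqF //.
lra.
Qed.

End MethodOfTypes.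

Lemma KL_radius_lt (R : realType) (eps : R) m k k' :
  (0 < m)%N -> (k < k')%N -> KL_radius eps m k < KL_radius eps m k'.
Proof.
move=> m_gt0 lt_kk'; rewrite ltrD2l ltr_pM2r; last by rewrite ln_gt0 // ltrDr ltr0n.
by rewrite ltr_pM2r ?invr_gt0 ?ltr0n // ltr_nat.
Qed.

Theorem proposition2 (R : realType) (n p p' : nat) (eps : R)
  (cP : {ffun 'I_n -> 'I_p.+1}) (cQ : {ffun 'I_n -> 'I_p'.+1}) :
  0 < eps < 1 ->
  (0 < p)%N -> (0 < p')%N ->
  (\sum_(i < n) (cP i : nat) = p)%N ->
  (\sum_(i < n) (cQ i : nat) = p')%N ->
  (((p%:R)^-1 * ln (eps^-1) + (2 * n)%:R / p%:R * ln (p%:R + 1))%:E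
     <= ereal_inf [set KL (emp cP) Q | Q in
          [set Q : 'I_n -> R | simplex Q /\
             (KL (emp cQ) Q <=
               ((p'%:R)^-1 * ln (eps^-1) + (2 * n)%:R / p'%:R * ln (p'%:R + 1))%:E)%E]])%E ->
  ~ (exists Q : 'I_n -> R, simplex Q /\
       typical p' eps [set Q] cQ /\ typical p eps [set Q] cP).
Proof.
move=> /andP[eps_gt0 _] p_gt0 p'_gt0 cP_sum cQ_sum inf_ge [Q [Q_simplex [cQ_typ cP_typ]]].
have n_gt0 : (0 < n)%N.
  rewrite lt0n; apply: contraTneq p_gt0 => n0.
  by rewrite -cP_sum big1 // => i; have := ltn_ord i; rewrite {2}n0.
have radius_lt m : (0 < m)%N -> KL_radius eps m n < KL_radius eps m (2 * n).
  by move=> m_gt0; apply: KL_radius_lt; rewrite // -{1}[n]mul1n ltn_pmul2r.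
have Q_ge0 := Q_simplex.1.
have Q_in_Qbar : simplex Q /\
    (KL (emp cQ) Q <= (KL_radius eps p' (2 * n))%:E)%E.
  split=> //; apply: le_trans (KL_emp_le_typical1 eps_gt0 Q_ge0 p'_gt0 cQ_sum cQ_typ) _.
  by rewrite lee_fin ltW // radius_lt.
have KLP_ge : ((KL_radius eps p (2 * n))%:E <= KL (emp cP) Q)%E.
  by apply: le_trans inf_ge _; apply: ereal_inf_lbound; exists Q.
have := le_trans KLP_ge (KL_emp_le_typical1 eps_gt0 Q_ge0 p_gt0 cP_sum cP_typ).
by rewrite lee_fin leNgt radius_lt.
Qed.
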